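(* Let $n\in\mathbb N$. Let $\varphi:C(S^1)\to B(H^2(S^1))$ be the symbol map $\varphi(f)=T_f$ and let $\varphi_n$ be its restriction to $C(S^1)_{(n)}$. Then $\varphi_n$ is a unital complete order isomorphism of $C(S^1)_{(n)}$ onto $\mathcal T_{(n)}=\{T_f: f\in C(S^1)_{(n)}\}$.
   Context: $S^1$ is the unit circle, $C(S^1)$ the continuous functions on it, $\hat f(k)$ the $k$-th Fourier coefficient. $C(S^1)_{(n)}$ is the operator system of $f\in C(S^1)$ with $\hat f(k)=0$ for $|k|\ge n$, with matrix ordering: $F\in M_p(C(S^1)_{(n)})$ positive iff $F(z)\ge 0$ for all $z\in S^1$, and unit the constant $1$. $H^2(S^1)\subseteq L^2(S^1)$ is the Hardy space (closed span of $z^k$, $k\ge0$), $P$ the orthogonal projection onto it, $M_f$ multiplication by $f$ on $L^2(S^1)$, and $T_f=PM_f|_{H^2(S^1)}$ is the Toeplitz operator with symbol $f$. $\mathcal T_{(n)}$ is an operator subsystem of $B(H^2(S^1))$. A unital complete order isomorphism is a unit-preserving linear bijection which, together with its inverse, is completely positive. *)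

From mathcomp Require Import all_boot all_order all_algebra complex.
Import Order.TTheory GRing.Theory Num.Theory.
From mathcomp Require Import all_classical all_reals all_analysis.
Import numFieldNormedType.Exports.
Set Implicit Arguments. Unset Strict Implicit. Unset Printing Implicit Defensive.
Local Open Scope ring_scope.

(* A function on S^1 is represented through the parametrisation
   theta |-> f(e^{i theta}), i.e. as a map R -> R[i] which is 2pi-periodic. *)
Definition circfun (R : realType) := R -> R[i].

Definition is_cont_circle (R : realType) (f : circfun R) : Prop :=
  continuous (fun t : R => complex.Re (f t)) /\ continuous (fun t : R => complex.Im (f t)) /\
  (forall t, f (t + 2 * pi) = f t).

Definition expi (R : realType) (t : R) : R[i] := Complex (cos t) (sin t).

Definition fourier (R : realType) (f : circfun R) (k : int) : R[i] :=
  let g := fun t : R => f t * expi (- (k%:~R * t)) in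
  Complex
    ((2 * pi)^-1 * Rintegral (@lebesgue_measure R) `[0, 2 * pi]%classic
                     (fun t => complex.Re (g t)))
    ((2 * pi)^-1 * Rintegral (@lebesgue_measure R) `[0, 2 * pi]%classic
                     (fun t => complex.Im (g t))).

Definition in_Cn (R : realType) (n : nat) (f : circfun R) : Prop :=
  is_cont_circle f /\ (forall k : int, (n <= `|k|)%N -> fourier f k = 0).

(* Operators on H^2(S^1) are represented by their matrices with respect to
   the orthonormal basis (z^j)_{j>=0}: entry (i,j) is <A z^j, z^i>. *)
Definition hop (R : realType) := nat -> nat -> R[i].

Definition idop (R : realType) : hop R := fun i j => (i == j)%:R.

Definition toeplitz (R : realType) (f : circfun R) : hop R :=
  fun i j => fourier f (i%:Z - j%:Z).

(* Positivity of F in M_p(C(S^1)_(n)): F(z) >= 0 in M_p(C) for all z in S^1. *)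
Definition fun_block_pos (R : realType) (p : nat)
    (F : 'I_p -> 'I_p -> circfun R) : Prop :=
  forall (t : R) (v : 'I_p -> R[i]),
    0 <= \sum_(a < p) \sum_(b < p) (v a)^* * F a b t * v b.

(* Positivity of a p x p operator matrix G in M_p(B(H^2)), i.e.
   <G xi, xi> >= 0, tested on xi in (H^2)^p with polynomial entries
   (a dense subspace; G has bounded entries). *)
Definition op_block_pos (R : realType) (p : nat) (G : 'I_p -> 'I_p -> hop R) : Prop :=
  forall (N : nat) (xi : 'I_p -> 'I_N -> R[i]),
    0 <= \sum_(a < p) \sum_(b < p) \sum_(i < N) \sum_(j < N)
           (xi a i)^* * G a b i j * xi b j.

(* For an analytic trigonometric polynomial xi(t) = sum_(j < N) x_j e^(ijt)
   the Toeplitz form is an average over the circle: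
     sum_(i,j) conj(x_i) \hat f(i - j) y_j = (1/2pi) int_0^2pi conj(xi_x) f xi_y,
   and similarly for p x p blocks; so pointwise positivity of F gives positivity
   of [T_(F a b)].  Conversely, plugging in xi_a = v_a (1 + e^(i(t - t1)))^M,
   whose squared modulus is the peak kernel (2 + 2 cos (t - t1))^M, shows that
   every moment int (2 + 2 cos (t - t1))^M <F(t) v, v> dt is nonnegative.  The
   kernel is larger near t1 than away from it by a factor growing geometrically
   in M, so a continuous periodic function with nonnegative moments is
   nonnegative.  The same kernels give injectivity (vanishing Fourier
   coefficients force vanishing moments), and unitality is
   int_0^2pi e^(ikt) dt = 2pi [k == 0]. *)

From mathcomp Require Import all_boot all_order all_algebra complex.
Import Order.TTheory GRing.Theory Num.Theory.
From mathcomp Require Import all_classical all_reals all_analysis.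
From mathcomp Require Import ring lra.
Import numFieldNormedType.Exports.
Set Implicit Arguments. Unset Strict Implicit. Unset Printing Implicit Defensive.
Local Open Scope classical_set_scope.
Local Open Scope ring_scope.

Lemma periodicz (U V : zmodType) (f : U -> V) (T : U) :
  periodic f T -> forall (k : int) a, f (a + T *~ k) = f a.
Proof.
move=> fT [n|n] a; first exact: periodicn.
by rewrite NegzE mulrNz -[in RHS](subrK (T *+ n.+1) a) periodicn.
Qed.

Notation integrable2pi f :=
  ((@lebesgue_measure _).-integrable `[0, 2 * pi]%classic (EFin \o f)).

Definition int2pi (R : realType) (f : R -> R) : R :=
  Rintegral (@lebesgue_measure R) `[0, 2 * pi]%classic f.

Section Integral2pi.
Variable R : realType.
Implicit Types (f g : R -> R) (a b c : R).

Lemma twopi_gt0 : 0 < 2 * pi :> R.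
Proof. by rewrite mulr_gt0 ?pi_gt0. Qed.

Lemma continuous_integrable2pi f : continuous f -> integrable2pi f.
Proof.
move=> cf; apply: continuous_compact_integrable; first exact: segment_compact.
exact: continuous_subspaceT.
Qed.

Lemma integrable2piZ c f : integrable2pi f -> integrable2pi (fun t => c * f t).
Proof. by move=> fi; apply: eq_integrable (integrableZl _ c fi). Qed.

Lemma integrable2piB f g : integrable2pi f -> integrable2pi g ->
  integrable2pi (fun t => f t - g t).
Proof. by move=> fi gi; apply: eq_integrable (integrableB _ fi gi). Qed.

Lemma int2piD f g : integrable2pi f -> integrable2pi g ->
  int2pi (fun t => f t + g t) = int2pi f + int2pi g.
Proof. by move=> fi gi; rewrite /int2pi RintegralD. Qed.

Lemma int2piB f g : integrable2pi f -> integrable2pi g ->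
  int2pi (fun t => f t - g t) = int2pi f - int2pi g.
Proof. by move=> fi gi; rewrite /int2pi RintegralB. Qed.

Lemma int2piZ c f : integrable2pi f -> int2pi (fun t => c * f t) = c * int2pi f.
Proof. by move=> fi; rewrite /int2pi RintegralZl. Qed.

Lemma eq_int2pi f g : {in `[0, 2 * pi], f =1 g} -> int2pi f = int2pi g.
Proof. by move=> fg; apply: eq_Rintegral => t /[!inE] /fg. Qed.

Lemma int2pi_ge0 f : {in `[0, 2 * pi], forall t, 0 <= f t} -> 0 <= int2pi f.
Proof. by move=> f0; apply: Rintegral_ge0 => t /f0. Qed.

Lemma le_int2pi f g : integrable2pi f -> integrable2pi g ->
  {in `[0, 2 * pi], forall t, f t <= g t} -> int2pi f <= int2pi g.
Proof. by move=> fi gi fg; apply: le_Rintegral => // t /fg. Qed.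

Lemma int2pi_cst c : int2pi (fun _ => c) = c * (2 * pi).
Proof.
by rewrite /int2pi Rintegral_cst //= lebesgue_measure_itv /= lte_fin twopi_gt0 /= oppr0 addr0.
Qed.

Lemma integrable2pi_indic a b : integrable2pi (\1_(`[a, b]%classic) : R -> R).
Proof. by apply: (@integrableS _ _ _ _ setT) => //; exact: integrable_indic_itv. Qed.

Lemma int2pi_indic a b : 0 <= a -> a <= b -> b <= 2 * pi ->
  int2pi (\1_(`[a, b]%classic)) = b - a.
Proof.
move=> a0 ab b2; rewrite /int2pi /Rintegral integral_indic //.
rewrite (_ : (_ `&` _)%classic = `[a, b]%classic); last first.
  apply/seteqP; split => [x [] //|x xab]; split => //.
  move: xab; rewrite /= !in_itv /= => /andP[xa xb].
  by rewrite (le_trans a0 xa) (le_trans xb b2).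
have /= := @lebesgue_measure_itv R `[a, b]; rewrite lte_fin.
by case: ltgtP ab => // [ab|->] _ ->; rewrite ?subrr.
Qed.

Lemma int2pi_derive f (F : R -> R) : (forall x : R, is_derive x 1 F (f x)) -> continuous f ->
  int2pi f = F (2 * pi) - F 0.
Proof.
move=> dF cf; have exF x : derivable F x 1 := @ex_derive _ _ _ _ _ _ _ (dF x).
have cF : continuous F.
  by move=> x; apply/differentiable_continuous; rewrite -derivable1_diffP.
rewrite /int2pi /Rintegral (@continuous_FTC2 _ f F _ _ twopi_gt0 (continuous_subspaceT cf)) //.
- split => [x _ //||]; [exact/cvg_at_right_filter/cF | exact/cvg_at_left_filter/cF].
- by move=> x _; rewrite derive1E derive_val.
Qed.

End Integral2pi.

Section RealAnalysis.
Variable R : realType.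
Implicit Types (f g u : R -> R) (a b c : R).

Lemma continuousD_fun f g : continuous f -> continuous g -> continuous (fun t => f t + g t).
Proof. by move=> cf cg x; apply: (continuousD (cf x) (cg x)). Qed.

Lemma continuousM_fun f g : continuous f -> continuous g -> continuous (fun t => f t * g t).
Proof. by move=> cf cg x; apply: (continuousM (cf x) (cg x)). Qed.

Lemma continuousN_fun f : continuous f -> continuous (fun t => - f t).
Proof. by move=> cf x; apply: (continuousN (cf x)). Qed.

Lemma continuousX_fun f n : continuous f -> continuous (fun t => f t ^+ n).
Proof. by move=> cf x; exact: (continuous_comp (cf x) (@exprn_continuous R n (f x))). Qed.

Lemma continuous_cos_comp f : continuous f -> continuous (fun t => cos (f t)).
Proof. by move=> cf x; apply: continuous_comp; [exact: cf | exact: continuous_cos]. Qed.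

Lemma continuous_sin_comp f : continuous f -> continuous (fun t => sin (f t)).
Proof. by move=> cf x; apply: continuous_comp; [exact: cf | exact: continuous_sin]. Qed.

Lemma continuous_scale c : continuous (fun t : R => c * t).
Proof.
have cc : continuous (fun _ : R => c) by move=> x; exact: cvg_cst.
have cid : continuous (fun t : R => t) by move=> x.
exact: (continuousM_fun cc cid).
Qed.

Lemma continuous_lt_ball u x c : {for x, continuous u} -> u x < c ->
  exists2 e, 0 < e & forall y, `|y - x| < e -> u y < c.
Proof.
move=> cu uxc; have /nbhs_ballP [e /= e0 He] : \forall y \near x, u y < c.
  exact: (cvgr_lt _ cu _ uxc).
by exists e => // y yx; apply: He; rewrite -ball_normE /= distrC.
Qed.

Lemma exists_mul_expr_lt (K q e : R) : `|q| < 1 -> 0 < e -> exists M, K * q ^+ M < e.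
Proof.
move=> q1 e0; have Kq : (fun M => K * q ^+ M) @ \oo --> (0 : R).
  by rewrite -(mulr0 K); apply: cvgM; [exact: cvg_cst | exact: cvg_expr].
have [N _ HN] : \forall M \near \oo, K * q ^+ M < e by exact: (cvgr_lt _ Kq _ e0).
by exists N; apply: HN => /=.
Qed.

Lemma cos_le_of_le a b : 0 <= a -> a <= b -> b <= pi -> cos b <= cos a.
Proof.
move=> a0 ab bpi; have api := le_trans ab bpi; have b0 := le_trans a0 ab.
by rewrite leNgt ltr_cos ?in_itv /= ?a0 ?b0 // -leNgt.
Qed.

Lemma periodic_lt0_interior u (t : R) : continuous u -> periodic u (2 * pi) -> u t < 0 ->
  exists2 t1, 0 < t1 < 2 * pi & u t1 < 0.
Proof.
move=> cu pu ut; have T0 := @twopi_gt0 R.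
(* Reduce t into [0, 2 pi) as s, then step right by r to avoid the endpoint 0. *)
set k := Num.floor (t / (2 * pi)); set s := t + (2 * pi) *~ (- k).
have us : u s = u t by rewrite /s periodicz.
have k_le : k%:~R * (2 * pi) <= t by rewrite -ler_pdivlMr // floor_le.
have k_gt : t < (k + 1)%:~R * (2 * pi) by rewrite -ltr_pdivrMr // floorD1_gt.
have s_bd : 0 <= s < 2 * pi by rewrite /s mulrNz -mulrzr; rewrite intrD in k_gt; lra.
have [e e_gt0 u_near] : exists2 e, 0 < e & forall y, `|y - s| < e -> u y < 0.
  by apply: continuous_lt_ball; [exact: cu | rewrite us].
set r := Num.min (e / 2) ((2 * pi - s) / 2).
have /andP[r_e r_s] : (r <= e / 2) && (r <= (2 * pi - s) / 2) by rewrite -le_min.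
have r_gt0 : 0 < r by rewrite lt_min; apply/andP; split; lra.
exists (s + r); first by apply/andP; split; lra.
by apply: u_near; rewrite addrAC subrr add0r gtr0_norm //; lra.
Qed.

End RealAnalysis.

Section ComplexMean.
Variable R : realType.
Local Notation C := R[i].
Implicit Types (g h : R -> C) (z : C) (a : R).

Lemma Re_mul z1 z2 : complex.Re (z1 * z2) =
  complex.Re z1 * complex.Re z2 - complex.Im z1 * complex.Im z2.
Proof. by case: z1 z2 => [? ?] [? ?]. Qed.

Lemma Im_mul z1 z2 : complex.Im (z1 * z2) =
  complex.Re z1 * complex.Im z2 + complex.Im z1 * complex.Re z2.
Proof. by case: z1 z2 => [? ?] [? ?]. Qed.

Lemma Re_conj z : complex.Re z^* = complex.Re z.
Proof. by case: z. Qed.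

Lemma Im_conj z : complex.Im z^* = - complex.Im z.
Proof. by case: z. Qed.

Lemma Re_realM a z : complex.Re (a%:C%C * z) = a * complex.Re z.
Proof. by case: z => ? ? /=; ring. Qed.

Lemma Im_realM a z : complex.Im (a%:C%C * z) = a * complex.Im z.
Proof. by case: z => ? ? /=; ring. Qed.

Lemma ge0_complexE z : (0 <= z) = (complex.Im z == 0) && (0 <= complex.Re z).
Proof. by rewrite lecE eq_sym. Qed.

Lemma expiD a b : expi (a + b) = expi a * expi b.
Proof. by rewrite /expi cosD sinD; simpc; rewrite [X in Complex _ X]addrC. Qed.

Lemma expiN a : expi (- a) = (expi a)^*.
Proof. by rewrite /expi cosN sinN. Qed.

Lemma expiMn n a : expi (n%:R * a) = expi a ^+ n.
Proof.
elim: n => [|n IH]; first by rewrite mul0r /expi cos0 sin0.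
by rewrite -addn1 natrD mulrDl mul1r expiD IH exprD expr1.
Qed.

Lemma expi_periodic : periodic (@expi R) (2 * pi).
Proof.
by move=> t; rewrite expiD [expi (2 * pi)]/expi mulr_natl cos2pi sin2pi mulr1.
Qed.

Lemma expi_int2pi (k : int) : expi (k%:~R * (2 * pi)) = 1 :> C.
Proof.
have := periodicz expi_periodic k 0; rewrite add0r mulrzl => ->.
by rewrite /expi cos0 sin0.
Qed.

Definition ccontinuous g :=
  continuous (fun t => complex.Re (g t)) /\ continuous (fun t => complex.Im (g t)).

Lemma ccontinuousD g h : ccontinuous g -> ccontinuous h -> ccontinuous (fun t => g t + h t).
Proof.
by move=> [g1 g2] [h1 h2]; split; under eq_fun do rewrite raddfD; apply: continuousD_fun.
Qed.

Lemma ccontinuousM g h : ccontinuous g -> ccontinuous h -> ccontinuous (fun t => g t * h t).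
Proof.
move=> [g1 g2] [h1 h2]; split.
- under eq_fun do rewrite Re_mul.
  by apply: continuousD_fun; [|apply: continuousN_fun]; apply: continuousM_fun.
- by under eq_fun do rewrite Im_mul; apply: continuousD_fun; apply: continuousM_fun.
Qed.

Lemma ccontinuous_cst z : ccontinuous (fun _ => z).
Proof. by split => x; apply: cvg_cst. Qed.

Lemma ccontinuousJ g : ccontinuous g -> ccontinuous (fun t => (g t)^*).
Proof.
move=> [g1 g2]; split; first by under eq_fun do rewrite Re_conj.
by under eq_fun do rewrite Im_conj; apply: continuousN_fun.
Qed.

Lemma ccontinuous_expi a : ccontinuous (fun t => expi (a * t)).
Proof.
by split; [apply: continuous_cos_comp | apply: continuous_sin_comp]; apply: continuous_scale.
Qed.

Lemma ccontinuous_sum (I : Type) (s : seq I) (G : I -> R -> C) :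
  (forall i, ccontinuous (G i)) -> ccontinuous (fun t => \sum_(i <- s) G i t).
Proof.
move=> cG; elim: s => [|i s IH].
  by under eq_fun do rewrite big_nil; exact: ccontinuous_cst.
by under eq_fun do rewrite big_cons; apply: ccontinuousD.
Qed.

Definition cmean g : C :=
  Complex ((2 * pi)^-1 * int2pi (fun t => complex.Re (g t)))
          ((2 * pi)^-1 * int2pi (fun t => complex.Im (g t))).

Lemma fourier_cmean h k : fourier h k = cmean (fun t => h t * expi (- (k%:~R * t))).
Proof. by []. Qed.

Lemma eq_cmean g h : {in `[0, 2 * pi], g =1 h} -> cmean g = cmean h.
Proof. by move=> gh; congr Complex; congr (_ * _); apply: eq_int2pi => t /gh ->. Qed.

Lemma cmeanD g h : ccontinuous g -> ccontinuous h ->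
  cmean (fun t => g t + h t) = cmean g + cmean h.
Proof.
move=> [g1 g2] [h1 h2]; rewrite /cmean; simpc; congr Complex; rewrite -mulrDr.
- by under eq_fun do rewrite raddfD; rewrite int2piD //; apply: continuous_integrable2pi.
- by under eq_fun do rewrite raddfD; rewrite int2piD //; apply: continuous_integrable2pi.
Qed.

Lemma cmeanZ z g : ccontinuous g -> cmean (fun t => z * g t) = z * cmean g.
Proof.
case: z => a b [/continuous_integrable2pi ig1 /continuous_integrable2pi ig2].
rewrite /cmean; simpc; congr Complex.
- under eq_fun do rewrite Re_mul /= -mulNr.
  by rewrite int2piD ?int2piZ ?integrable2piZ //; ring.
- under eq_fun do rewrite Im_mul /=.
  by rewrite int2piD ?int2piZ ?integrable2piZ //; ring.
Qed.

Lemma cmean_sum (I : Type) (s : seq I) (G : I -> R -> C) :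
  (forall i, ccontinuous (G i)) ->
  cmean (fun t => \sum_(i <- s) G i t) = \sum_(i <- s) cmean (G i).
Proof.
move=> cG; elim: s => [|i s IH].
  by under eq_fun do rewrite big_nil; rewrite big_nil /cmean /= int2pi_cst !(mul0r, mulr0).
rewrite big_cons -IH -cmeanD //; last exact: ccontinuous_sum.
by under eq_fun do rewrite big_cons.
Qed.

Lemma cmean_ge0 g : {in `[0, 2 * pi], forall t, 0 <= g t} -> 0 <= cmean g.
Proof.
move=> g0; rewrite ge0_complexE /=; apply/andP; split.
  rewrite (@eq_int2pi _ _ (fun _ => 0)) ?int2pi_cst ?mul0r ?mulr0 // => t /g0.
  by rewrite ge0_complexE => /andP[/eqP].
apply: mulr_ge0; first by rewrite invr_ge0 ltW ?twopi_gt0.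
by apply: int2pi_ge0 => t /g0; rewrite ge0_complexE => /andP[].
Qed.

Lemma cmean_realM (f : R -> R) g : cmean (fun t => (f t)%:C%C * g t) =
  Complex ((2 * pi)^-1 * int2pi (fun t => f t * complex.Re (g t)))
          ((2 * pi)^-1 * int2pi (fun t => f t * complex.Im (g t))).
Proof.
by rewrite /cmean; congr Complex; congr (_ * _); apply: eq_int2pi => t _;
  rewrite ?Re_realM ?Im_realM.
Qed.

End ComplexMean.

Section ExponentialMean.
Variable R : realType.
Implicit Types (a : R).

Lemma is_derive_scale a (x : R) : is_derive x 1 (fun t : R => a * t) a.
Proof.
have := @is_deriveZ R R^o R^o id a x 1 1 (is_derive_id _ _).
by move/is_derive_eq; apply; rewrite /GRing.scale /= mulr1.
Qed.

Lemma is_derive_sin_scale a (x : R) :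
  is_derive x 1 (fun t : R => sin (a * t)) (a * cos (a * x)).
Proof.
have := is_derive1_comp (is_derive_sin (a * x)) (is_derive_scale a x).
by move/is_derive_eq; apply; rewrite mulrC.
Qed.

Lemma is_derive_cos_scale a (x : R) :
  is_derive x 1 (fun t : R => cos (a * t)) (- a * sin (a * x)).
Proof.
have := is_derive1_comp (is_derive_cos (a * x)) (is_derive_scale a x).
by move/is_derive_eq; apply; rewrite mulrC mulrN mulNr.
Qed.

Lemma cmean_expi (k : int) : cmean (fun t : R => expi (k%:~R * t)) = (k == 0)%:R.
Proof.
have [->|k0] := eqVneq k 0.
  rewrite (@eq_cmean _ _ (fun _ => 1)) => [|t _]; last by rewrite mul0r /expi cos0 sin0.
  by rewrite /cmean /= !int2pi_cst mul0r mulr0 mul1r mulVf ?gt_eqF ?twopi_gt0.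
set a : R := k%:~R; have a0 : a != 0 by rewrite intr_eq0.
have [ccos csin] := ccontinuous_expi a.
have /(congr1 (@complex.Re R)) /= cos1 := @expi_int2pi R k.
have /(congr1 (@complex.Im R)) /= sin0' := @expi_int2pi R k.
have int_cos : int2pi (fun t => cos (a * t)) = 0.
  apply: (mulfI a0); rewrite mulr0 -int2piZ; last exact: continuous_integrable2pi.
  rewrite (int2pi_derive (is_derive_sin_scale a)); last first.
    exact: (continuousM_fun (@cst_continuous R R a) ccos).
  by rewrite sin0' mulr0 sin0 subrr.
have int_sin : int2pi (fun t => sin (a * t)) = 0.
  have na0 : - a != 0 by rewrite oppr_eq0.
  apply: (mulfI na0); rewrite mulr0 -int2piZ; last exact: continuous_integrable2pi.
  rewrite (int2pi_derive (is_derive_cos_scale a)); last first.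
    exact: (continuousM_fun (@cst_continuous R R (- a)) csin).
  by rewrite cos1 mulr0 cos0 subrr.
by rewrite /cmean /= int_cos int_sin mulr0.
Qed.

End ExponentialMean.

Section ToeplitzForms.
Variable R : realType.
Local Notation C := R[i].

Definition trigpoly N (x : 'I_N -> C) (t : R) : C := \sum_(i < N) x i * expi (i%:R * t).

Lemma ccontinuous_trigpoly N (x : 'I_N -> C) : ccontinuous (trigpoly x).
Proof.
apply: ccontinuous_sum => i.
by apply: ccontinuousM; [apply: ccontinuous_cst | apply: ccontinuous_expi].
Qed.

Lemma trigpolyZ N c (x : 'I_N -> C) t : trigpoly (fun i => c * x i) t = c * trigpoly x t.
Proof. by rewrite /trigpoly mulr_sumr; apply: eq_bigr => i _; rewrite mulrA. Qed.

Lemma toeplitz_form (h : R -> C) N (x y : 'I_N -> C) : ccontinuous h ->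
  \sum_(i < N) \sum_(j < N) (x i)^* * toeplitz h i j * y j =
  cmean (fun t => (trigpoly x t)^* * h t * trigpoly y t).
Proof.
move=> ch; set e := fun (i j : 'I_N) t => h t * expi (- ((i%:Z - j%:Z)%:~R * t)).
have ce i j : ccontinuous (e i j).
  by apply: ccontinuousM => //; under eq_fun do rewrite -mulNr; apply: ccontinuous_expi.
rewrite (@eq_cmean _ _ (fun t => \sum_(i < N) \sum_(j < N) ((x i)^* * y j) * e i j t));
  last first.
  move=> t _; rewrite /trigpoly rmorph_sum mulr_suml mulr_suml; apply: eq_bigr => i _.
  rewrite mulr_sumr; apply: eq_bigr => j _.
  rewrite /e intrD intrN mulrBl opprB addrC expiD expiN !rmorphM /=; ring.
rewrite cmean_sum => [|i]; last first.
  by apply: ccontinuous_sum => j; apply: ccontinuousM => //; apply: ccontinuous_cst.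
apply: eq_bigr => i _; rewrite cmean_sum => [|j]; last first.
  by apply: ccontinuousM => //; apply: ccontinuous_cst.
by apply: eq_bigr => j _; rewrite cmeanZ // /toeplitz fourier_cmean; ring.
Qed.

Lemma toeplitz_block_form p N (F : 'I_p -> 'I_p -> R -> C) (xi : 'I_p -> 'I_N -> C) :
  (forall a b, ccontinuous (F a b)) ->
  \sum_(a < p) \sum_(b < p) \sum_(i < N) \sum_(j < N)
    (xi a i)^* * toeplitz (F a b) i j * xi b j =
  cmean (fun t => \sum_(a < p) \sum_(b < p)
    (trigpoly (xi a) t)^* * F a b t * trigpoly (xi b) t).
Proof.
move=> cF; have cT a b :
    ccontinuous (fun t => (trigpoly (xi a) t)^* * F a b t * trigpoly (xi b) t).
  by apply: ccontinuousM; [apply: ccontinuousM => //; apply: ccontinuousJ|];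
    apply: ccontinuous_trigpoly.
rewrite cmean_sum => [|a]; last exact: ccontinuous_sum.
by apply: eq_bigr => a _; rewrite cmean_sum //; apply: eq_bigr => b _; rewrite toeplitz_form.
Qed.

End ToeplitzForms.

Section PeakKernel.
Variable R : realType.
Local Notation C := R[i].
Implicit Types (u : R -> R) (g : R -> C) (a t : R) (M : nat).

Definition peak_kernel (M : nat) (t1 t : R) : R := (2 + 2 * cos (t - t1)) ^+ M.

Definition binomial_weights (M : nat) (t1 : R) : 'I_M.+1 -> C :=
  fun j => 'C(M, j)%:R * expi (- (j%:R * t1)).
Arguments binomial_weights : clear implicits.

Lemma trigpoly_binomial_weights (M : nat) (t1 t : R) :
  trigpoly (binomial_weights M t1) t = (1 + expi (t - t1)) ^+ M.
Proof.
rewrite addrC exprD1n /trigpoly; apply: eq_bigr => j _.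
by rewrite /binomial_weights -expiMn mulrBr addrC expiD -mulr_natl; ring.
Qed.

Lemma normsq_1Dexpi (s : R) : (1 + expi s)^* * (1 + expi s) = (2 + 2 * cos s)%:C%C :> C.
Proof.
rewrite /expi; simpc; congr Complex; last by ring.
by have := cos2Dsin2 s; rewrite !expr2 => cs; nra.
Qed.

Lemma normsq_trigpoly_binomial_weights (M : nat) (t1 t : R) :
  (trigpoly (binomial_weights M t1) t)^* * trigpoly (binomial_weights M t1) t =
  (peak_kernel M t1 t)%:C%C.
Proof.
by rewrite trigpoly_binomial_weights rmorphXn -exprMn normsq_1Dexpi /peak_kernel rmorphXn.
Qed.

Lemma toeplitz_peak_kernel_form (h : R -> C) (M : nat) (t1 : R) : ccontinuous h ->
  \sum_(i < M.+1) \sum_(j < M.+1)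
    (binomial_weights M t1 i)^* * toeplitz h i j * binomial_weights M t1 j =
  cmean (fun t => (peak_kernel M t1 t)%:C%C * h t).
Proof.
move=> ch; rewrite toeplitz_form //; apply: eq_cmean => t _.
by rewrite mulrAC normsq_trigpoly_binomial_weights.
Qed.

Lemma peak_kernel_ge0 M (t1 t : R) : 0 <= peak_kernel M t1 t.
Proof. by rewrite exprn_ge0 //; have := cos_geN1 (t - t1); lra. Qed.

Lemma continuous_peak_kernel M (t1 : R) : continuous (peak_kernel M t1).
Proof.
have cst x : continuous (fun _ : R => x) := @cst_continuous R R x.
apply: continuousX_fun; apply: continuousD_fun => //; apply: continuousM_fun => //.
by apply: continuous_cos_comp; apply: continuousD_fun => // x; exact: cvg_id.
Qed.

Lemma peak_kernel_ge_near M (t1 t a : R) : `|t - t1| <= a -> a <= pi ->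
  (2 + 2 * cos a) ^+ M <= peak_kernel M t1 t.
Proof.
move=> ta api; apply: lerXn2r; rewrite ?nnegrE.
- by have := cos_geN1 a; lra.
- by have := cos_geN1 (t - t1); lra.
- by rewrite -[cos (t - t1)]cos_norm lerD2l ler_pM2l // cos_le_of_le.
Qed.

Lemma peak_kernel_le_far M (t1 t a : R) : 0 <= a <= pi -> a <= `|t - t1| <= 2 * pi - a ->
  peak_kernel M t1 t <= (2 + 2 * cos a) ^+ M.
Proof.
move=> /andP[a0 api] /andP[ta ta']; apply: lerXn2r; rewrite ?nnegrE.
- by have := cos_geN1 (t - t1); lra.
- by have := cos_geN1 a; lra.
rewrite lerD2l ler_pM2l // -[cos (t - t1)]cos_norm.
have [tpi|tpi] := lerP `|t - t1| pi; first exact: cos_le_of_le.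
have cos2piB x : cos (2 * pi - x) = cos x.
  by rewrite cosB mulr_natl cos2pi sin2pi mul1r mul0r addr0.
rewrite -cos2piB; apply: cos_le_of_le; lra.
Qed.

Lemma peak_kernel_mul_le u M (t1 t eta d Mb : R) :
  0 < eta <= pi / 2 -> eta <= t1 <= 2 * pi - eta -> 0 <= d -> 0 <= Mb ->
  (forall s, `|s - t1| < eta -> u s <= - d) -> 0 <= t <= 2 * pi -> u t <= Mb ->
  peak_kernel M t1 t * u t <= Mb * (2 + 2 * cos eta) ^+ M
    - d * (2 + 2 * cos (eta / 2)) ^+ M * \1_(`[t1 - eta / 2, t1 + eta / 2]%classic) t.
Proof.
move=> /andP[eta0 eta_pi] /andP[eta_t1 eta_t1'] d0 Mb0 u_near t02 utMb.
have pi0 := @pi_gt0 R; have K0 := peak_kernel_ge0 M t1 t.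
have BM0 : 0 <= Mb * (2 + 2 * cos eta) ^+ M.
  by rewrite mulr_ge0 // exprn_ge0 //; have := cos_geN1 eta; lra.
rewrite indicE; have [tI|tI] := boolP (t \in _); rewrite ?mulr1 ?mulr0 ?subr0.
  have /andP[tI1 tI2] : t1 - eta / 2 <= t <= t1 + eta / 2 by move: tI; rewrite inE /= in_itv.
  have near : `|t - t1| <= eta / 2 by rewrite ler_norml; lra.
  have KA := peak_kernel_ge_near M near ltac:(lra).
  have Kud : peak_kernel M t1 t * u t <= peak_kernel M t1 t * - d.
    by rewrite ler_wpM2l // u_near //; lra.
  have dKA : d * (2 + 2 * cos (eta / 2)) ^+ M <= d * peak_kernel M t1 t by rewrite ler_wpM2l.
  by rewrite mulrN in Kud; lra.
have [tn|tf] := ltrP `|t - t1| eta.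
  by apply: le_trans BM0; rewrite mulr_ge0_le0 //; have := u_near _ tn; lra.
have tf' : `|t - t1| <= 2 * pi - eta by rewrite ler_norml; lra.
have KB : peak_kernel M t1 t <= (2 + 2 * cos eta) ^+ M.
  by apply: peak_kernel_le_far; [lra | rewrite tf tf'].
apply: le_trans (ler_wpM2l K0 utMb) _.
by rewrite mulrC ler_wpM2l.
Qed.

Lemma int2pi_peak_kernel_mul_le u M (t1 eta d Mb : R) : continuous u ->
  0 < eta <= pi / 2 -> eta <= t1 <= 2 * pi - eta -> 0 <= d -> 0 <= Mb ->
  (forall s, `|s - t1| < eta -> u s <= - d) -> (forall t, 0 <= t <= 2 * pi -> u t <= Mb) ->
  int2pi (fun t => peak_kernel M t1 t * u t) <=
    Mb * (2 + 2 * cos eta) ^+ M * (2 * pi) - d * (2 + 2 * cos (eta / 2)) ^+ M * eta.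
Proof.
move=> cu eta_bd t1_bd d0 Mb0 u_near u_le.
have icst c : integrable2pi (fun _ : R => c).
  exact: continuous_integrable2pi (@cst_continuous R R c).
have iI := @integrable2pi_indic R (t1 - eta / 2) (t1 + eta / 2).
have Ku_le t t02 := peak_kernel_mul_le M eta_bd t1_bd d0 Mb0 u_near t02 (u_le t t02).
apply: le_trans (le_int2pi _ _ Ku_le) _.
- exact/continuous_integrable2pi/continuousM_fun/cu/continuous_peak_kernel.
- exact/integrable2piB/integrable2piZ.
move: eta_bd t1_bd => /andP[eta0 _] /andP[eta_t1 eta_t1'].
rewrite int2piB ?int2piZ ?int2pi_cst ?int2pi_indic //;
  [| lra | lra | lra | exact: integrable2piZ].
have -> : t1 + eta / 2 - (t1 - eta / 2) = eta by field.
by rewrite mulrA.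
Qed.

Lemma peak_kernel_moment_lt0 u (t1 : R) : continuous u -> 0 < t1 < 2 * pi -> u t1 < 0 ->
  exists M, int2pi (fun t => peak_kernel M t1 t * u t) < 0.
Proof.
move=> cu /andP[t1_gt0 t1_lt] ut1; have pi0 := @pi_gt0 R.
set d := - u t1 / 2; have d_gt0 : 0 < d by rewrite /d; lra.
have [e e_gt0 u_near] : exists2 e, 0 < e & forall s, `|s - t1| < e -> u s < - d.
  by apply: continuous_lt_ball; [exact: cu | rewrite /d; lra].
have [c _ u_max] := EVT_max (ltW (@twopi_gt0 R)) (continuous_subspaceT cu).
set eta := Num.min (Num.min (e / 2) t1) (Num.min (2 * pi - t1) (pi / 2)).
have /and4P[eta_e eta_t1 eta_t1' eta_pi] :
    [&& eta <= e / 2, eta <= t1, eta <= 2 * pi - t1 & eta <= pi / 2].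
  by have := lexx eta; rewrite {2}/eta !le_min -!andbA.
have eta_gt0 : 0 < eta by rewrite /eta !lt_min -!andbA; apply/and4P; split; lra.
set A := 2 + 2 * cos (eta / 2); set B := 2 + 2 * cos eta.
have B_gt0 : 0 < B by have := @cos_ge0_pihalf R eta ltac:(lra); rewrite /B; lra.
have BA : B < A by rewrite /A /B ltrD2l ltr_pM2l // ltr_cos ?in_itv /=; lra.
(* Since B < A, the factor (B / A) ^+ M makes the far part of the majorant negligible. *)
have [M HM] : exists M, `|u c| * (2 * pi) * (B / A) ^+ M < d * eta.
  apply: exists_mul_expr_lt; last exact: mulr_gt0.
  by rewrite ger0_norm ?divr_ge0 ?ltr_pdivrMr ?mul1r //; lra.
exists M; apply: le_lt_trans
  (int2pi_peak_kernel_mul_le (eta := eta) M cu _ _ (ltW d_gt0) (normr_ge0 (u c)) _ _) _.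
- by rewrite eta_gt0.
- by rewrite eta_t1 /=; lra.
- by move=> s st1; apply/ltW/u_near; lra.
- by move=> t t02; apply: le_trans (u_max t _) (ler_norm _); rewrite in_itv.
have A_gt0 : 0 < A by lra.
have AM : 0 < A ^+ M by rewrite exprn_gt0.
rewrite -(ltr_pM2r AM) -[_ * _ * A ^+ M]mulrA -exprMn divfK ?(gt_eqF A_gt0) // in HM.
by rewrite -/A -/B; lra.
Qed.

Lemma ge0_from_peak_kernel u : continuous u -> periodic u (2 * pi) ->
  (forall M (t1 : R), 0 <= int2pi (fun t => peak_kernel M t1 t * u t)) ->
  forall t, 0 <= u t.
Proof.
move=> cu pu u_mom t; rewrite leNgt; apply/negP => ut.
have [t1 t1_in ut1] := periodic_lt0_interior cu pu ut.
by have [M] := peak_kernel_moment_lt0 cu t1_in ut1; rewrite ltNge u_mom.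
Qed.

Lemma eq0_from_peak_kernel u : continuous u -> periodic u (2 * pi) ->
  (forall M (t1 : R), int2pi (fun t => peak_kernel M t1 t * u t) = 0) ->
  forall t, u t = 0.
Proof.
move=> cu pu u_mom t; apply/eqP; rewrite eq_le -oppr_ge0.
rewrite (ge0_from_peak_kernel cu pu) => [|M t1]; last by rewrite u_mom.
have pnu : periodic (fun t => - u t) (2 * pi) by move=> s; rewrite pu.
have mom_nu M t1 : 0 <= int2pi (fun t => peak_kernel M t1 t * - u t).
  rewrite (@eq_int2pi _ _ (fun t => -1 * (peak_kernel M t1 t * u t))) => [|s _]; last by ring.
  rewrite int2piZ ?u_mom ?mulr0 //.
  exact/continuous_integrable2pi/continuousM_fun/cu/continuous_peak_kernel.
by rewrite andbT; exact: (ge0_from_peak_kernel (continuousN_fun cu) pnu mom_nu t).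
Qed.

Lemma cge0_from_peak_kernel g : ccontinuous g -> periodic g (2 * pi) ->
  (forall M (t1 : R), 0 <= cmean (fun t => (peak_kernel M t1 t)%:C%C * g t)) ->
  forall t, 0 <= g t.
Proof.
move=> [cRe cIm] pg g_mom t; have inv_gt0 : 0 < (2 * pi)^-1 :> R by rewrite invr_gt0 twopi_gt0.
have mom M t1 : (int2pi (fun t => peak_kernel M t1 t * complex.Im (g t)) == 0)
    && (0 <= int2pi (fun t => peak_kernel M t1 t * complex.Re (g t))).
  have := g_mom M t1.
  by rewrite cmean_realM ge0_complexE /= mulf_eq0 (gt_eqF inv_gt0) pmulr_rge0.
rewrite ge0_complexE; apply/andP; split.
  apply/eqP; apply: (eq0_from_peak_kernel cIm) => [s|M t1]; first by rewrite pg.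
  by have /andP[/eqP] := mom M t1.
apply: (ge0_from_peak_kernel cRe) => [s|M t1]; first by rewrite pg.
by have /andP[_] := mom M t1.
Qed.

Lemma ceq0_from_peak_kernel g : ccontinuous g -> periodic g (2 * pi) ->
  (forall M (t1 : R), cmean (fun t => (peak_kernel M t1 t)%:C%C * g t) = 0) ->
  forall t, g t = 0.
Proof.
move=> [cRe cIm] pg g_mom t; have inv_gt0 : 0 < (2 * pi)^-1 :> R by rewrite invr_gt0 twopi_gt0.
have mom M t1 : (int2pi (fun t => peak_kernel M t1 t * complex.Re (g t)) == 0)
    && (int2pi (fun t => peak_kernel M t1 t * complex.Im (g t)) == 0).
  by have /eqP := g_mom M t1; rewrite cmean_realM eq_complex /= !mulf_eq0 (gt_eqF inv_gt0).
apply/eqP; rewrite eq_complex; apply/andP; split; apply/eqP.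
  apply: (eq0_from_peak_kernel cRe) => [s|M t1]; first by rewrite pg.
  by have /andP[/eqP] := mom M t1.
apply: (eq0_from_peak_kernel cIm) => [s|M t1]; first by rewrite pg.
by have /andP[_ /eqP] := mom M t1.
Qed.

End PeakKernel.
Arguments binomial_weights {R} M t1 _.

Section ToeplitzSymbol.
Variable R : realType.
Local Notation C := R[i].
Implicit Types (f g h : R -> C).

Lemma ccontinuous_Cn n f : in_Cn n f -> ccontinuous f.
Proof. by case=> [[cRe [cIm _]] _]. Qed.

Lemma periodic_Cn n f : in_Cn n f -> periodic f (2 * pi).
Proof. by case=> [[_ [_ pf]] _]. Qed.

Lemma fourier_linear f g c k : ccontinuous f -> ccontinuous g ->
  fourier (fun t => c * f t + g t) k = c * fourier f k + fourier g k.
Proof.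
move=> cf cg; set e := fun t : R => expi (- (k%:~R * t)).
have ce : ccontinuous e by rewrite /e; under eq_fun do rewrite -mulNr; apply: ccontinuous_expi.
rewrite !fourier_cmean (@eq_cmean _ _ (fun t => c * (f t * e t) + g t * e t)) => [|t _];
  last by rewrite /e; ring.
have cfe : ccontinuous (fun t => f t * e t) by apply: ccontinuousM.
have cge : ccontinuous (fun t => g t * e t) by apply: ccontinuousM.
by rewrite cmeanD ?cmeanZ //; exact: ccontinuousM (ccontinuous_cst c) cfe.
Qed.

Lemma toeplitz1 : toeplitz (fun _ : R => 1 : C) = @idop R.
Proof.
apply/funext => i; apply/funext => j; rewrite /toeplitz /idop fourier_cmean.
rewrite (@eq_cmean _ _ (fun t => expi ((j%:Z - i%:Z)%:~R * t))) => [|t _].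
  by rewrite cmean_expi subr_eq0 eqz_nat eq_sym.
by rewrite mul1r -mulNr -intrN opprB.
Qed.

Lemma fourier_eq0 h : ccontinuous h -> periodic h (2 * pi) ->
  (forall k, fourier h k = 0) -> forall t, h t = 0.
Proof.
move=> ch ph h0; apply: ceq0_from_peak_kernel => // M t1.
rewrite -toeplitz_peak_kernel_form // big1 // => i _.
by rewrite big1 // => j _; rewrite /toeplitz h0 mulr0 mul0r.
Qed.

Lemma toeplitz_inj f g : ccontinuous f -> ccontinuous g ->
  periodic f (2 * pi) -> periodic g (2 * pi) -> toeplitz f = toeplitz g -> f = g.
Proof.
move=> cf cg pf pg fg; have fourier_fg k : fourier f k = fourier g k.
  (* The first column of T_f lists \hat f(m), the first row \hat f(- m.+1). *)
  case: k => m.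
    by have := congr1 (fun T => T m 0%N) fg; rewrite /toeplitz subr0.
  by have := congr1 (fun T => T 0%N m.+1) fg; rewrite /toeplitz sub0r -NegzE.
have h0 := @fourier_eq0 (fun t => -1 * g t + f t).
apply/funext => t; apply/eqP; rewrite -subr_eq0 addrC -mulN1r h0 // => [|s|k].
- by apply: ccontinuousD => //; apply: ccontinuousM => //; apply: ccontinuous_cst.
- by rewrite pf pg.
- by rewrite fourier_linear // fourier_fg; ring.
Qed.

Lemma toeplitz_block_pos p (F : 'I_p -> 'I_p -> R -> C) :
  (forall a b, ccontinuous (F a b)) ->
  fun_block_pos F -> op_block_pos (fun a b => toeplitz (F a b)).
Proof.
move=> cF Fpos N xi; rewrite toeplitz_block_form //.
by apply: cmean_ge0 => t _; apply: Fpos.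
Qed.

Lemma fun_block_pos_of_toeplitz p (F : 'I_p -> 'I_p -> R -> C) :
  (forall a b, ccontinuous (F a b)) -> (forall a b, periodic (F a b) (2 * pi)) ->
  op_block_pos (fun a b => toeplitz (F a b)) -> fun_block_pos F.
Proof.
move=> cF pF Tpos t v; set G := fun s => \sum_(a < p) \sum_(b < p) (v a)^* * F a b s * v b.
have cG : ccontinuous G.
  apply: ccontinuous_sum => a; apply: ccontinuous_sum => b.
  by apply: ccontinuousM; [apply: ccontinuousM => //|]; apply: ccontinuous_cst.
have pG : periodic G (2 * pi).
  by move=> s; apply: eq_bigr => a _; apply: eq_bigr => b _; rewrite pF.
apply: (cge0_from_peak_kernel cG pG) => M t1; set w := binomial_weights M t1.
rewrite (@eq_cmean _ _ (fun s => \sum_(a < p) \sum_(b < p)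
    (trigpoly (fun i => v a * w i) s)^* * F a b s * trigpoly (fun i => v b * w i) s)).
  by rewrite -toeplitz_block_form //; apply: Tpos.
move=> s _; rewrite /G mulr_sumr; apply: eq_bigr => a _; rewrite mulr_sumr.
apply: eq_bigr => b _; rewrite !trigpolyZ -normsq_trigpoly_binomial_weights rmorphM /=.
by ring.
Qed.

End ToeplitzSymbol.

Unset Implicit Arguments.

Theorem proposition4p1 (R : realType) (n : nat) :
  [/\ (* phi_n is linear *)
      (forall (f g : circfun R) (c : R[i]), in_Cn n f -> in_Cn n g ->
         toeplitz (fun t => c * f t + g t) = (fun i j => c * toeplitz f i j + toeplitz g i j)),
      (* phi_n is injective (hence a bijection onto T_(n) = its image) *)
      (forall f g : circfun R, in_Cn n f -> in_Cn n g -> toeplitz f = toeplitz g -> f = g),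
      (* phi_n is unital *)
      toeplitz (fun _ : R => 1) = @idop R
    & (* phi_n and its inverse are completely positive *)
      forall (p : nat) (F : 'I_p -> 'I_p -> circfun R),
        (forall a b, in_Cn n (F a b)) ->
        (fun_block_pos F <-> op_block_pos (fun a b => toeplitz (F a b)))].
Proof.
split.
- move=> f g c /ccontinuous_Cn cf /ccontinuous_Cn cg.
  by apply/funext => i; apply/funext => j; apply: fourier_linear.
- move=> f g Cf Cg; apply: toeplitz_inj.
  + exact: ccontinuous_Cn Cf.
  + exact: ccontinuous_Cn Cg.
  + exact: periodic_Cn Cf.
  + exact: periodic_Cn Cg.
- exact: toeplitz1.
- move=> p F CF; have cF a b := ccontinuous_Cn (CF a b).
  split; first exact: toeplitz_block_pos.
  by apply: fun_block_pos_of_toeplitz => // a b; apply: periodic_Cn (CF a b).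
Qed.
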